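(* Let $q$ be a prime power and let $\mathcal{C}\subseteq\mathbb{F}_q^N$ be a $(u,v)$-ordered-batch code of dimension $n$ and redundancy $r=N-n$, where $u,v$ are positive integers with $v\ge2$, $uv\le n$, and $q\ge\max\{4u\binom{n}{u},7\}$. For each $u$-subset $I=\{i_1,\dots,i_u\}\subseteq[n]$ fix a family of pairwise disjoint recovering sets $R_{j,l}=R_{j,l}(I)$ ($j\in[u]$, $l\in[v]$) as in the definition of a $(u,v)$-ordered-batch code. Then there exists an $(r-v+2)$-dimensional subspace $V$ of the dual code $\mathcal{C}^{\perp}$ such that for every $u$-subset $I=\{i_1,\dots,i_u\}\subseteq[n]$ and every $j\in[u]$, $V$ contains a vector $\mathbf{v}_j$ with $i_j\in\operatorname{supp}(\mathbf{v}_j)\subseteq\big(\bigcup_{l=2}^{v}R_{j,l}\big)\cup\{i_j\}$.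
   Context: $[m]=\{1,\dots,m\}$. A linear code $\mathcal{C}\subseteq\mathbb{F}^N$ of dimension $n$ is systematic if for every $\mathbf{x}\in\mathbb{F}^n$ there is a unique codeword whose first $n$ coordinates equal $\mathbf{x}$. A set $R\subseteq[N]$ is a recovering set for $i\in[n]$ if there are scalars $\lambda_k$ ($k\in R$) with $\mathbf{c}(i)=\sum_{k\in R}\lambda_k\mathbf{c}(k)$ for all $\mathbf{c}\in\mathcal{C}$. $(u,v)$-ordered-batch code: a systematic linear code $\mathcal{C}\subseteq\mathbb{F}^N$ of dimension $n$ such that for every set $I=\{i_1,\dots,i_u\}\subseteq[n]$ of $u$ distinct indices there exist $uv$ pairwise disjoint sets $R_{j,l}\subseteq[N]$ ($j\in[u]$, $l\in[v]$), each $R_{j,l}$ a recovering set for $i_j$, such that the directed graph $D_I$ with vertex set $I$ and an arc $i_j\to i_k$ (for $j,k\in[u]$, $j=k$ allowed) whenever $i_k\in\bigcup_{l=1}^{v}R_{j,l}$, is acyclic (no directed cycles, no loops). $\mathcal{C}^\perp$ is the dual code (dimension $r$), and $\operatorname{supp}(\mathbf{w})$ is the set of nonzero coordinates of $\mathbf{w}$. *)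

From HB Require Import structures.
From mathcomp Require Import all_boot all_order all_algebra.
Set Implicit Arguments. Unset Strict Implicit. Unset Printing Implicit Defensive.
Import GRing.Theory.
Local Open Scope ring_scope.

(* Conventions: length N = n + r; coordinates are 'I_(n + r); the
   information (systematic) coordinates are the first n, i.e. lshift r i
   for i : 'I_n.  A linear code C is the row space of a matrix
   C : 'M[F]_(n + r); a word c : 'rV_(n+r) is a codeword iff (c <= C)%MS. *)

Section Codes.
Variables (F : fieldType) (n r : nat).
Local Notation N := (n + r).

Definition info (i : 'I_n) : 'I_N := lshift r i.

Definition systematic (C : 'M[F]_N) : Prop :=
  forall x : 'rV[F]_n, exists! c : 'rV[F]_N, (c <= C)%MS /\ lsubmx c = x.

Definition recovering (C : 'M[F]_N) (i : 'I_n) (R : {set 'I_N}) : Prop :=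
  exists lam : 'I_N -> F, forall c : 'rV[F]_N, (c <= C)%MS ->
    c 0 (info i) = \sum_(k in R) lam k * c 0 k.

Definition dual_code (C : 'M[F]_N) : 'M[F]_N := kermx C^T.

Definition supp (w : 'rV[F]_N) : {set 'I_N} := [set k | w 0 k != 0].

Definition acyclic_rel (T : finType) (e : rel T) : Prop :=
  forall x y, e x y -> ~~ connect e y x.

(* For a u-subset I, an ordering ord : 'I_u -> 'I_n of I (i_j = ord j) and
   sets R j l (j in [u], l in [v]) as required by the definition of a
   (u,v)-ordered-batch code. *)
Definition obc_witness (C : 'M[F]_N) (u v : nat) (I : {set 'I_n})
    (ord : 'I_u -> 'I_n) (R : 'I_u -> 'I_v -> {set 'I_N}) : Prop :=
  [/\ injective ord,
      [set ord j | j : 'I_u] = I,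
      (forall j j' l l', (j, l) != (j', l') -> [disjoint R j l & R j' l']),
      (forall j l, recovering C (ord j) (R j l)) &
      acyclic_rel [rel j k : 'I_u | info (ord k) \in \bigcup_(l < v) R j l]].

End Codes.

Arguments obc_witness {F n r} C u v I ord R.

Definition ordered_batch_code {F : fieldType} {n r : nat} (C : 'M[F]_(n + r)) (u v : nat) : Prop :=
  systematic C /\
  forall I : {set 'I_n}, #|I| = u ->
    exists ord, exists R, obc_witness C u v I ord R.

From HB Require Import structures.
From mathcomp Require Import all_boot all_order all_algebra.
From mathcomp Require mxabelem.
From mathcomp Require Import zify.
Set Implicit Arguments. Unset Strict Implicit. Unset Printing Implicit Defensive.
Import GRing.Theory.
Local Open Scope ring_scope.

(** The recovering sets R_{j,2}, ..., R_{j,v} of i_j are pairwise disjoint and, by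
   acyclicity, avoid i_j; each gives a dual codeword equal to 1 at i_j and supported on
   R_{j,l} and i_j, and disjointness makes these v-1 codewords independent.  Call W_{I,j}
   the space they span.  Choose v-2 linear forms one at a time so that, for every (I,j),
   the coordinate at i_j together with the forms chosen so far stays injective on W_{I,j}:
   each new form only has to avoid u C(n,u) < q proper subspaces, and the q^N vectors of
   F^N cannot be covered by fewer than q sets of size at most q^(N-1).  The common kernel
   V of the forms inside the dual code then has codimension v-2 there and contains, for
   every (I,j), the vector of W_{I,j} with coordinate 1 at i_j. *)

Lemma card_bigcup_leq_sum (T I : finType) (P : {set I}) (B : I -> {set T}) :
  (#|\bigcup_(p in P) B p| <= \sum_(p in P) #|B p|)%N.
Proof.
elim/big_rec2: _ => [|p A s _ IH]; first by rewrite cards0.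
by rewrite (leq_trans (leq_of_leqif (leq_card_setU _ _))) ?leq_add2l.
Qed.

Lemma exists_notin_bigcup (T I : finType) (P : {set I}) (B : I -> {set T}) q :
  (0 < #|T|)%N -> (#|P| < q)%N -> (forall p, p \in P -> #|B p| * q <= #|T|)%N ->
  exists x : T, forall p, p \in P -> x \notin B p.
Proof.
move=> T_gt0 P_lt_q B_small.
have U_small : (#|\bigcup_(p in P) B p| < #|T|)%N.
  rewrite -(ltn_pmul2r (leq_ltn_trans (leq0n _) P_lt_q)).
  apply: leq_ltn_trans (_ : _ <= (\sum_(p in P) #|B p|) * q)%N _.
    by rewrite leq_mul2r card_bigcup_leq_sum orbT.
  rewrite big_distrl /= (@leq_ltn_trans (\sum_(p in P) #|T|)) ?leq_sum //.
  by rewrite sum_nat_const mulnC ltn_pmul2l.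
have /subsetPn[x _ xU] : ~~ ([set: T] \subset \bigcup_(p in P) B p).
  by apply: contraTN U_small => /subset_leq_card; rewrite cardsT -leqNgt.
by exists x => p Pp; apply: contra xU => xB; apply/bigcupP; exists p.
Qed.

Lemma card_submx_preimage (F : finFieldType) N k g (Z : 'M[F]_(N, k)) (G : 'M[F]_(g, k)) :
  row_full Z -> ~~ row_full G ->
  (#|[set psi : 'rV[F]_N | (psi *m Z <= G)%MS]| * #|F| <= #|F| ^ N)%N.
Proof.
move=> fullZ notfullG.
have -> : [set psi : 'rV[F]_N | (psi *m Z <= G)%MS] = mxabelem.rowg (kermx (Z *m cokermx G)).
  by apply/setP => psi; rewrite mxabelem.mem_rowg inE submxE -mulmxA; apply/eqP/sub_kermxP.
rewrite mxabelem.card_rowg mxrank_ker -expnSr leq_exp2l ?card_finNzRing_gt1 //.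
have : Z *m cokermx G != 0.
  apply: contra notfullG => /eqP ZG0; rewrite /row_full eqn_leq rank_leq_col /=.
  by rewrite -[X in (X <= _)%N](eqP fullZ) mxrankS // submxE ZG0.
rewrite -mxrank_eq0 -lt0n; have := rank_leq_row (Z *m cokermx G); lia.
Qed.

Lemma exists_row_avoiding_preimages (F : finFieldType) N k g (T : finType) (P : {set T})
    (Z : T -> 'M[F]_(N, k)) (G : T -> 'M[F]_(g, k)) :
  (#|P| < #|F|)%N -> (forall p, p \in P -> row_full (Z p)) ->
  (forall p, p \in P -> ~~ row_full (G p)) ->
  exists psi : 'rV[F]_N, forall p, p \in P -> ~~ (psi *m Z p <= G p)%MS.
Proof.
move=> P_small fullZ notfullG.
have [|p Pp|psi escapes] :=
  exists_notin_bigcup (B := fun p => [set psi : 'rV[F]_N | (psi *m Z p <= G p)%MS]) _ P_small.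
- by rewrite card_mx expn_gt0 ltnW ?card_finNzRing_gt1.
- by rewrite card_mx mul1n card_submx_preimage ?fullZ ?notfullG.
by exists psi => p /escapes; rewrite inE.
Qed.

Lemma mxrank_ltn_of_witness (F : fieldType) m1 m2 k (A : 'M[F]_(m1, k)) (B : 'M[F]_(m2, k))
    (x : 'rV[F]_k) :
  (A <= B)%MS -> (x <= B)%MS -> ~~ (x <= A)%MS -> (\rank A < \rank B)%N.
Proof.
move=> AB xB; apply: contraNT; rewrite -leqNgt => rkBA.
by rewrite (submx_trans xB) // -(geq_leqif (mxrank_leqif_sup AB)).
Qed.

Lemma generic_functionals (F : finFieldType) N k (T : finType) (P : {set T})
    (a : T -> 'rV[F]_N) (Z : T -> 'M[F]_(N, k)) t :
  (#|P| < #|F|)%N -> (forall p, p \in P -> row_full (Z p)) ->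
  (forall p, p \in P -> a p *m Z p != 0) -> (t < k)%N ->
  exists Psi : 'M[F]_(t, N), forall p, p \in P -> row_free (col_mx (a p) Psi *m Z p).
Proof.
move=> P_small Z_full aZ_neq0; elim: t => [_ | t IHt t_lt_k].
  by exists 0 => p Pp; rewrite /row_free mul_col_mx mul0mx rank_col_mx0 rank_rV aZ_neq0.
have [Psi Psi_free] := IHt (ltnW t_lt_k).
pose G p := col_mx (a p) Psi *m Z p.
have [psi escapes] : exists psi : 'rV[F]_N, forall p, p \in P -> ~~ (psi *m Z p <= G p)%MS.
  apply: exists_row_avoiding_preimages => // p Pp.
  by rewrite /row_full (eqP (Psi_free p Pp)) neq_ltn t_lt_k.
exists (col_mx psi Psi) => p Pp.
have /andP[psi_sub Psi_sub] : (psi <= col_mx psi Psi)%MS && (Psi <= col_mx psi Psi)%MS.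
  by rewrite -col_mx_sub.
have /andP[ap_sub ext_sub] :
    (a p <= col_mx (a p) (col_mx psi Psi))%MS &&
    (col_mx psi Psi <= col_mx (a p) (col_mx psi Psi))%MS.
  by rewrite -col_mx_sub.
rewrite /row_free eqn_leq rank_leq_row [X in (X <= _)%N]addnS -(eqP (Psi_free p Pp)).
apply: (mxrank_ltn_of_witness _ _ (escapes p Pp)); apply: submxMr.
  by rewrite col_mx_sub ap_sub (submx_trans Psi_sub).
exact: submx_trans psi_sub ext_sub.
Qed.

Lemma row_free_col_mxr (F : fieldType) m1 m2 k (A : 'M[F]_(m1, k)) (B : 'M[F]_(m2, k)) :
  row_free (col_mx A B) -> row_free B.
Proof.
rewrite /row_free -addsmxE => /eqP rkAB; rewrite eqn_leq rank_leq_row /=.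
have := leq_of_leqif (mxrank_adds_leqif A B); have := rank_leq_row A; lia.
Qed.

Lemma row_free_private_coordinates (F : fieldType) k N (W : 'M[F]_(k, N)) :
  (forall l, exists2 c, W l c != 0 & forall l', l' != l -> W l' c = 0) -> row_free W.
Proof.
move=> private; rewrite -kermx_eq0; apply/rowV0P => b /sub_kermxP bW0; apply/rowP => l.
have [c Wlc others] := private l.
have := congr1 (fun M : 'rV[F]_N => M 0 c) bW0.
rewrite !mxE (bigD1 l) //= big1 => [|l' l'l]; last by rewrite others ?mulr0.
by rewrite addr0 => /eqP; rewrite mulf_eq0 (negbTE Wlc) orbF => /eqP.
Qed.

Lemma solve_in_row_space (F : fieldType) k N (W A : 'M[F]_(k, N)) (y : 'rV[F]_k) :
  row_free (A *m W^T) -> exists2 x : 'rV[F]_N, (x <= W)%MS & x *m A^T = y.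
Proof.
rewrite row_free_unit -unitmx_tr trmx_mul trmxK => unitWA.
exists (y *m invmx (W *m A^T) *m W); first exact: submxMl.
by rewrite -mulmxA mulmxKV.
Qed.

Lemma cap_kermx_coord_vector (F : fieldType) N t (W : 'M[F]_(1 + t, N)) (Psi : 'M[F]_(t, N))
    (c : 'I_N) :
  row_free (col_mx (delta_mx 0 c : 'rV_N) Psi *m W^T) ->
  exists2 x : 'rV[F]_N, (x <= W :&: kermx Psi^T)%MS & x 0 c = 1.
Proof.
case/(solve_in_row_space (row_mx (1%:M : 'M_1) (0 : 'rV_t))) => x xW.
rewrite tr_col_mx mul_mx_row => /eq_row_mx[x_c xPsi].
exists x; first by rewrite sub_capmx xW; apply/sub_kermxP.
by move/(congr1 (fun M : 'M_1 => M 0 0)): x_c; rewrite trmx_delta -colE !mxE.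
Qed.

Lemma mxrank_cap_kermx (F : fieldType) N k t (D : 'M[F]_N) (W : 'M[F]_(k, N))
    (Psi : 'M[F]_(t, N)) :
  (W <= D)%MS -> row_free (Psi *m W^T) -> \rank (D :&: kermx Psi^T)%MS = (\rank D - t)%N.
Proof.
move=> WD PsiW_free.
have rk_DPsi : \rank (D *m Psi^T) = t.
  apply/eqP; rewrite eqn_leq rank_leq_col -[X in (X <= _)%N](eqP PsiW_free).
  by rewrite -mxrank_tr trmx_mul trmxK mxrankS ?submxMr.
by rewrite -(mxrank_mul_ker D Psi^T) rk_DPsi addKn.
Qed.

Lemma generic_subspace (F : finFieldType) N m (T : finType) (P : {set T}) (D : 'M[F]_N)
    (c : T -> 'I_N) (W : T -> 'M[F]_(m.+1, N)) :
  (#|P| < #|F|)%N -> P != set0 ->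
  (forall p, p \in P -> [/\ (W p <= D)%MS, row_free (W p) & col (c p) (W p) != 0]) ->
  exists V : 'M[F]_N, [/\ (V <= D)%MS, \rank V = (\rank D - m)%N &
    forall p, p \in P -> exists2 x : 'rV[F]_N, (x <= V :&: W p)%MS & x 0 (c p) = 1].
Proof.
move=> P_small /set0Pn[p0 Pp0] HW.
have [p Pp|p Pp|Psi Psi_generic] := generic_functionals
  (a := fun p => delta_mx 0 (c p)) (Z := fun p => (W p)^T) P_small _ _ (ltnSn m).
- by have [_ W_free _] := HW p Pp; rewrite /row_full mxrank_tr.
- by have [_ _ W_col] := HW p Pp; rewrite -rowE -tr_col trmx_eq0.
exists (D :&: kermx Psi^T)%MS; split; first exact: capmxSl.
  have [W_D _ _] := HW p0 Pp0.
  have := Psi_generic p0 Pp0; rewrite mul_col_mx => /row_free_col_mxr PsiW_free.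
  exact: mxrank_cap_kermx W_D PsiW_free.
move=> p Pp; have [W_D _ _] := HW p Pp.
have [x] := cap_kermx_coord_vector (Psi_generic p Pp); rewrite !sub_capmx => /andP[xW xPsi] x_c.
by exists x; rewrite // !sub_capmx (submx_trans xW W_D) xPsi xW.
Qed.

Section DualCode.
Variables (F : fieldType) (n r : nat) (C : 'M[F]_(n + r)).

Lemma dual_codeP (w : 'rV[F]_(n + r)) :
  reflect (forall c : 'rV_(n + r), (c <= C)%MS -> \sum_k w 0 k * c 0 k = 0)
          (w <= dual_code C)%MS.
Proof.
apply: (iffP sub_kermxP) => [wC c /submxP[x ->] | orth].
  transitivity ((w *m (x *m C)^T) 0 0).
    by rewrite [RHS]mxE; apply: eq_bigr => k _; rewrite [in RHS]mxE.
  by rewrite trmx_mul mulmxA wC mul0mx mxE.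
apply/rowP => s; rewrite !mxE -[RHS](orth (row s C) (row_sub s C)).
by apply: eq_bigr => k _; rewrite !mxE.
Qed.

Lemma recovering_dual_vector i S : recovering C i S -> info r i \notin S ->
  exists w : 'rV[F]_(n + r),
    [/\ (w <= dual_code C)%MS, w 0 (info r i) = 1 & supp w \subset info r i |: S].
Proof.
case=> lam rec iS.
exists (\row_k ((k == info r i)%:R - (k \in S)%:R * lam k)); split.
- apply/dual_codeP => c cC.
  under eq_bigr => k _ do rewrite mxE mulrBl.
  rewrite sumrB (bigD1 (info r i)) //= eqxx mul1r big1 => [|k /negbTE->]; last by rewrite mul0r.
  rewrite addr0 (rec c cC) big_mkcond /=; apply/eqP; rewrite subr_eq0; apply/eqP.
  by apply: eq_bigr => k _; case: (k \in S); rewrite ?mul1r ?mul0r.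
- by rewrite mxE eqxx (negbTE iS) mul0r subr0.
- apply/subsetP => k; rewrite !inE mxE.
  by case: (k == info r i); case: (k \in S); rewrite ?mul0r ?subrr ?eqxx.
Qed.

Lemma systematic_dual_vector_off_info i (w : 'rV[F]_(n + r)) : systematic C ->
  (w <= dual_code C)%MS -> w 0 (info r i) != 0 -> exists2 k, k != info r i & w 0 k != 0.
Proof.
move=> sysC /dual_codeP orth wi.
have [c [[cC c_info] _]] := sysC (delta_mx 0 i).
have ci : c 0 (info r i) = 1.
  by move/(congr1 (fun x : 'rV_n => x 0 i)): c_info; rewrite !mxE !eqxx.
case: (pickP [pred k | (k != info r i) && (w 0 k != 0)]) => [k /andP[]|none]; first by exists k.
have := orth c cC; rewrite (bigD1 (info r i)) //= big1 => [|k ki]; last first.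
  by have := none k; rewrite /= ki => /negbFE/eqP->; rewrite mul0r.
by rewrite ci mulr1 addr0 => /eqP; rewrite (negbTE wi).
Qed.

End DualCode.

Lemma mxrank_dual_code (F : finFieldType) n r (C : 'M[F]_(n + r)) :
  systematic C -> \rank (dual_code C) = r.
Proof.
move=> sysC; suff rkC : \rank C = n by rewrite mxrank_ker mxrank_tr rkC addKn.
apply: (expnI (card_finNzRing_gt1 F)); rewrite -mxabelem.card_rowg.
have lsub_inj : {in mxabelem.rowg C &, injective (@lsubmx F 1 n r)}.
  move=> c1 c2; rewrite !mxabelem.mem_rowg => c1C c2C c12.
  by have [c [_ uniq_c]] := sysC (lsubmx c1); rewrite -(uniq_c c1) ?(uniq_c c2).
have lsub_onto : [set lsubmx c | c in mxabelem.rowg C] = [set: 'rV[F]_n].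
  apply/setP => x; rewrite inE; have [c [[cC <-] _]] := sysC x.
  by apply/imsetP; exists c; rewrite ?mxabelem.mem_rowg.
by rewrite -(card_in_imset lsub_inj) lsub_onto cardsT card_mx mul1n.
Qed.

Lemma supp_submx (F : fieldType) n r k (W : 'M[F]_(k, n + r)) (x : 'rV[F]_(n + r)) :
  (x <= W)%MS -> supp x \subset \bigcup_l supp (row l W).
Proof.
case/submxP => y ->; apply/subsetP => c; rewrite inE mxE => xc.
case: (pickP [pred l | W l c != 0]) => [l Wlc | none].
  by apply/bigcupP; exists l; rewrite // inE mxE.
move: xc; rewrite big1 ?eqxx // => l _.
by have := none l; rewrite /= => /negbFE/eqP->; rewrite mulr0.
Qed.

Lemma obc_info_notin_recovering (F : fieldType) n r (C : 'M[F]_(n + r)) u v I ord R :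
  obc_witness C u v I ord R -> forall j l, info r (ord j) \notin R j l.
Proof.
case=> _ _ _ _ acyclic j l; apply: contraL (connect0 _ j) => iR.
by apply: acyclic; apply/bigcupP; exists l.
Qed.

Lemma obc_local_dual_basis (F : finFieldType) n r (C : 'M[F]_(n + r)) u m I ord
    (R : 'I_u -> 'I_m.+2 -> {set 'I_(n + r)}) (j : 'I_u) :
  systematic C -> obc_witness C u m.+2 I ord R ->
  exists W : 'M[F]_(m.+1, n + r),
    [/\ (W <= dual_code C)%MS, row_free W, (forall l, W l (info r (ord j)) = 1) &
        forall l, supp (row l W) \subset info r (ord j) |: R j (lift ord0 l)].
Proof.
move=> sysC wit; have [_ _ disjR recR _] := wit.
have /fin_all_exists[w Hw] : forall l : 'I_m.+1, exists w : 'rV[F]_(n + r),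
    [/\ (w <= dual_code C)%MS, w 0 (info r (ord j)) = 1 &
        supp w \subset info r (ord j) |: R j (lift ord0 l)].
  move=> l; exact: recovering_dual_vector (recR j _) (obc_info_notin_recovering wit j _).
exists (\matrix_l w l); split; last 2 first.
- by move=> l; rewrite mxE; case: (Hw l).
- by move=> l; rewrite rowK; case: (Hw l).
- by apply/row_subP => l; rewrite rowK; case: (Hw l).
have off_info l c : c != info r (ord j) -> w l 0 c != 0 -> c \in R j (lift ord0 l).
  move=> c_info wlc; have [_ _ /subsetP/(_ c)] := Hw l.
  by rewrite !inE (negbTE c_info) wlc; apply.
apply: row_free_private_coordinates => l; have [wl_dual wl_info _] := Hw l.
have [|c c_info wlc] := systematic_dual_vector_off_info (i := ord j) sysC wl_dual.
  by rewrite wl_info oner_neq0.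
exists c => [|l' l'l]; rewrite mxE //; apply/eqP; apply: contraTT (off_info l c c_info wlc).
move/(off_info l' c c_info)/(disjointFr (disjR j j (lift ord0 l') (lift ord0 l) _)) => -> //.
by rewrite xpair_eqE eqxx (inj_eq lift_inj).
Qed.

Theorem mainTheorem2 (F : finFieldType) (n r u v : nat) (C : 'M[F]_(n + r))
    (ord : {set 'I_n} -> 'I_u -> 'I_n)
    (R : {set 'I_n} -> 'I_u -> 'I_v -> {set 'I_(n + r)}) :
  (0 < u)%N -> (2 <= v)%N -> (u * v <= n)%N ->
  (maxn (4 * u * 'C(n, u)) 7 <= #|F|)%N ->
  ordered_batch_code C u v ->
  (forall I : {set 'I_n}, #|I| = u -> obc_witness C u v I (ord I) (R I)) ->
  exists V : 'M[F]_(n + r),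
    [/\ (V <= dual_code C)%MS,
        \rank V = (r + 2 - v)%N &
        forall I : {set 'I_n}, #|I| = u -> forall j : 'I_u,
          exists w : 'rV[F]_(n + r),
            [/\ (w <= V)%MS,
                info r (ord I j) \in supp w &
                supp w \subset
                  (\bigcup_(l : 'I_v | (1 <= l)%N) R I j l) :|: [set info r (ord I j)]]].
Proof.
move=> u_gt0 v_ge2 uv_le_n q_large [sysC _] witness.
have u_le_n : (u <= n)%N by nia.
case: v R v_ge2 witness {uv_le_n} => [|[|m]] // R _ witness.
pose P := setX [set I : {set 'I_n} | #|I| == u] [set: 'I_u].
have /fin_all_exists[W HW] : forall p : {set 'I_n} * 'I_u, exists W : 'M[F]_(m.+1, n + r),
    p \in P -> [/\ (W <= dual_code C)%MS, row_free W,
                   (forall l, W l (info r (ord p.1 p.2)) = 1) &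
        forall l, supp (row l W) \subset info r (ord p.1 p.2) |: R p.1 p.2 (lift ord0 l)].
  case=> I j; rewrite in_setX !inE andbT; have [cardI|] := eqVneq #|I| u; last by exists 0.
  by have [W HW] := obc_local_dual_basis j sysC (witness I cardI); exists W.
have card_P : #|P| = ('C(n, u) * u)%N by rewrite /P cardsX card_draws cardsT !card_ord.
have binom_gt0 : (0 < 'C(n, u))%N by rewrite bin_gt0.
have [||p Pp|V [V_dual rkV V_meets]] := generic_subspace
  (c := fun p => info r (ord p.1 p.2)) (D := dual_code C) (W := W) (P := P).
- rewrite card_P (leq_trans _ (leq_trans (leq_maxl _ 7) q_large)) //; nia.
- by rewrite -card_gt0 card_P muln_gt0 binom_gt0.
- have [W_dual W_free W_info _] := HW p Pp; split=> //.
  by apply/eqP => /colP/(_ ord0)/eqP; rewrite !mxE W_info oner_eq0.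
exists V; split=> //; first by rewrite rkV mxrank_dual_code // -[m.+2]addn2 subnDr.
move=> I cardI j; have Pp : (I, j) \in P by rewrite /P in_setX !inE cardI eqxx.
have [_ _ _ W_supp] := HW _ Pp.
have [x] := V_meets _ Pp; rewrite sub_capmx => /andP[xV xW] x_info.
exists x; split=> //; first by rewrite inE x_info oner_neq0.
apply: subset_trans (supp_submx xW) _; apply/bigcupsP => l _.
apply: subset_trans (W_supp l) _; rewrite setUC setSU //.
exact: (bigcup_sup (lift ord0 l)).
Qed.
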